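(* Assume (R). Then for all integers $r,s\ge0$, $$(-1)^rA_{r,s}(x)=(-1)^sA_{s,r}(-x).$$
   Context: Let $(\alpha_n)_{n\ge0}$ be an arbitrary sequence of complex numbers; its Appell polynomials are $A_n(x)=\sum_{\nu=0}^{n}\binom{n}{\nu}\alpha_{n-\nu}x^\nu$. For $r,s\ge0$ define $A_{r,s}(x)=\sum_{\nu=0}^{r}\binom{r}{\nu}A_{s+\nu}(x)$ (umbrally $(A(x)+1)^rA(x)^s$). Property (R) means $A_n(1-x)=(-1)^nA_n(x)$ for all $n\ge0$. *)

From HB Require Import structures.
From mathcomp Require Import all_boot all_order all_algebra.
From mathcomp Require Import complex.
From mathcomp Require Import Rstruct.
Set Implicit Arguments. Unset Strict Implicit. Unset Printing Implicit Defensive.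
Import Order.TTheory GRing.Theory Num.Theory.
Local Open Scope ring_scope.

Notation Cplx := (Rdefinitions.R [i])%type.

Definition appell (alpha : nat -> Cplx) (n : nat) (x : Cplx) : Cplx :=
  \sum_(0 <= nu < n.+1) (alpha (n - nu)%N *+ 'C(n, nu)) * x ^+ nu.

Definition appell2 (alpha : nat -> Cplx) (r s : nat) (x : Cplx) : Cplx :=
  \sum_(0 <= nu < r.+1) appell alpha (s + nu) x *+ 'C(r, nu).

Definition propR (alpha : nat -> Cplx) : Prop :=
  forall (n : nat) (x : Cplx), appell alpha n (1 - x) = (-1) ^+ n * appell alpha n x.

From HB Require Import structures.
From mathcomp Require Import all_boot all_order all_algebra.
From mathcomp Require Import complex Rstruct ring.
Local Open Scope ring_scope.
Import GRing.Theory.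

(* The sequence alpha defines the linear "umbral" functional
   L(p) = sum_i alpha_i p_i on polynomials, i.e. L(t^i) = alpha_i.  By the
   binomial theorem A_n(x) = L((t + x)^n), and consequently
   A_{r,s}(x) = L((t + x)^s (t + x + 1)^r).

   Property (R) at x = 0 says L((t + 1)^n) = L((-t)^n) for every n; by
   linearity this becomes L(h(t + 1)) = L(h(-t)) for every polynomial h.
   The theorem then follows by applying this reflection principle to
   h(t) = (t - x - 1)^r (t - x)^s, for which h(t + 1) is the polynomial
   representing A_{s,r}(-x) and h(-t) is (-1)^(r+s) times the one
   representing A_{r,s}(x). *)

Section Umbra.
Variable alpha : nat -> Cplx.

Definition umbra (p : {poly Cplx}) : Cplx := \sum_(i < size p) alpha i * p`_i.

Lemma umbra_widen {p : {poly Cplx}} {N : nat} :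
  (size p <= N)%N -> umbra p = \sum_(i < N) alpha i * p`_i.
Proof.
move=> le_pN; rewrite /umbra (big_ord_widen _ (fun i => alpha i * p`_i) le_pN).
rewrite big_mkcond.
apply: eq_bigr => i _; case: ifPn => //; rewrite -leqNgt => le_pi.
by rewrite nth_default ?mulr0.
Qed.

(* L is linear, so it is declared as a semilinear (scalar) map, which makes
   the generic lemmas linear_sum, linearZ and linearMn available for it. *)
Lemma umbraZ (c : Cplx) (p : {poly Cplx}) : umbra (c *: p) = c * umbra p.
Proof.
rewrite (umbra_widen (size_scale_leq c p)) /umbra mulr_sumr.
by apply: eq_bigr => i _; rewrite coefZ mulrCA.
Qed.

Lemma umbraD (p q : {poly Cplx}) : umbra (p + q) = umbra p + umbra q.
Proof.
rewrite (umbra_widen (size_polyD p q)).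
rewrite (umbra_widen (leq_maxl (size p) (size q))).
rewrite (umbra_widen (leq_maxr (size p) (size q))) -big_split.
by apply: eq_bigr => i _; rewrite coefD mulrDr.
Qed.

HB.instance Definition _ :=
  GRing.isSemilinear.Build Cplx {poly Cplx} Cplx _ umbra (umbraZ, umbraD).

Lemma umbra_Xn (k : nat) : umbra 'X^k = alpha k.
Proof.
rewrite /umbra size_polyXn big_ord_recr /= coefXn eqxx mulr1 big1 ?add0r //.
by move=> i _; rewrite coefXn ltn_eqF ?mulr0.
Qed.

Lemma appell_umbra (n : nat) (x : Cplx) :
  appell alpha n x = umbra (('X + x%:P) ^+ n).
Proof.
rewrite exprDn linear_sum /appell big_mkord; apply: eq_bigr => nu _.
rewrite linearMn /= -polyC_exp [in RHS]mulrC mul_polyC linearZ /= umbra_Xn.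
by rewrite -mulrnAr mulrC.
Qed.

Lemma appell2_umbra (r s : nat) (x : Cplx) :
  appell2 alpha r s x = umbra (('X + x%:P) ^+ s * ('X + (x + 1)%:P) ^+ r).
Proof.
rewrite polyCD addrA exprD1n mulr_sumr linear_sum /appell2 big_mkord.
by apply: eq_bigr => nu _; rewrite mulrnAr linearMn /= -exprD appell_umbra.
Qed.

Lemma umbra_reflection (h : {poly Cplx}) :
  propR alpha -> umbra (h \Po ('X + 1)) = umbra (h \Po - 'X).
Proof.
move=> hR; rewrite !comp_polyE !linear_sum; apply: eq_bigr => i _.
rewrite !linearZ /=; congr (_ * _).
have neg_X : - 'X = (-1) *: ('X + 0%:P) :> {poly Cplx} by rewrite addr0 scaleN1r.
rewrite -[in LHS]polyC1 -appell_umbra -[in LHS](subr0 1) hR.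
by rewrite neg_X exprZn linearZ /= -appell_umbra.
Qed.

End Umbra.

Theorem mainTheorem7 (alpha : nat -> Cplx) (hR : propR alpha) (r s : nat) (x : Cplx) :
  (-1) ^+ r * appell2 alpha r s x = (-1) ^+ s * appell2 alpha s r (- x).
Proof.
pose h : {poly Cplx} := ('X - (x + 1)%:P) ^+ r * ('X - x%:P) ^+ s.
have h_shift : h \Po ('X + 1) = ('X + (- x)%:P) ^+ r * ('X + (- x + 1)%:P) ^+ s.
  rewrite comp_polyM !rmorphXn /= !comp_polyB comp_polyX !comp_polyC.
  by rewrite !polyCD !polyCN polyC1; congr (_ ^+ _ * _ ^+ _); ring.
have h_reflect : h \Po (- 'X) = ((-1) ^+ r * (-1) ^+ s)
    *: (('X + x%:P) ^+ s * ('X + (x + 1)%:P) ^+ r).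
  rewrite comp_polyM !rmorphXn /= !comp_polyB comp_polyX !comp_polyC.
  have neg_sum c : - 'X - c%:P = (-1) *: ('X + c%:P) :> {poly Cplx}.
    by rewrite scaleN1r opprD.
  rewrite !neg_sum !exprZn -scalerAl -scalerAr scalerA.
  by congr (_ *: _); apply: mulrC.
rewrite [appell2 _ s r _]appell2_umbra -h_shift umbra_reflection // h_reflect linearZ /=.
by rewrite -appell2_umbra mulrA mulrCA -exprMn mulrNN mulr1 expr1n mulr1.
Qed.
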